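(* Let $p\geq 3$ be a prime, $u\in\{2,\ldots,p-1\}$ and $s$ a positive integer. Then $$\nu_{p}\big(A_{p,(p-1)(up^s-1)}(n)\big)\geq 2$$ for infinitely many $n\in\mathbb{N}$.
   Context: For an integer $m\geq 2$ and a positive integer $k$, the integers $A_{m,k}(n)$, $n\in\mathbb{N}=\{0,1,2,\ldots\}$, are defined by the formal power series identity $\prod_{i=0}^{\infty}\big(1-x^{m^{i}}\big)^{-k}=\sum_{n=0}^{\infty}A_{m,k}(n)x^{n}$. For a prime $p$, $\nu_p(n)$ denotes the $p$-adic valuation of the integer $n$, with $\nu_p(0)=+\infty$. *)

From mathcomp Require Import all_boot all_order all_algebra.
Set Implicit Arguments. Unset Strict Implicit. Unset Printing Implicit Defensive.
Import GRing.Theory.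
Local Open Scope ring_scope.

(* Truncation (degrees <= N) of the formal geometric series
   (1 - x^(m^i))^(-1) = \sum_{j >= 0} x^(j m^i). *)
Definition geom_trunc (m i N : nat) : {poly int} :=
  \sum_(j < N.+1) 'X^(j * m ^ i).

(* A_{m,k}(n) = [x^n] \prod_{i >= 0} (1 - x^(m^i))^(-k).
   Only factors with m^i <= n and terms of degree <= n contribute to the
   coefficient of x^n (for m >= 2 every i with m^i <= n satisfies i <= n),
   so the truncated finite product computes the coefficient exactly. *)
Definition A (m k n : nat) : int :=
  (\prod_(i < n.+1) (geom_trunc m i n) ^+ k)`_n.

From mathcomp Require Import all_boot all_order all_algebra.
From mathcomp Require Import zify ring.
Set Implicit Arguments. Unset Strict Implicit. Unset Printing Implicit Defensive.
Import GRing.Theory.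
Local Open Scope ring_scope.

(* Let P be the truncated product of geometric series, so that
   A_{p,k}(n) = [x^n] P^k, and Q = \prod_(i <= n) (1 - x^(p^i)), so that
   QP = 1 mod x^(n+1).  Frobenius gives (1 - x) Q^p = (1 - x) Q(x^p) = Q modulo
   (x^(n+1), p), hence P^(p-1) = 1 - x modulo (x^(n+1), p); raising to the p-th
   power lifts this to p^2, and for k = (p-1)(u p^s - 1) we get
   A_{p,k}(n) = [x^n] Q^(p-1) (1 - x)^(u p^s) mod p^2.  Write
   (1 - x)^(u p^s) = (1 - x^(p^s))^u + p R with R(1) = 0: since the coefficients
   of Q^(p-1) are 1 mod p, the term p R contributes 0 mod p^2.  For
   n = ((N p + e) p + r) p^s the remaining coefficient factors, through the base-p
   digits of n, as a multiple of K_r B_e + K_(p+r) B_(e-1), where K = (1 - x)^(p-1+u)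
   and B = (1 - x)^(p-1).  For r = 0 or r = 1 the sum K_r + K_(p+r) is divisible by
   p but not by p^2 (this is where 2 <= u < p is used), and then a suitable digit
   0 < e < p makes K_r B_e + K_(p+r) B_(e-1) divisible by p^2. *)

Section IdealCongruence.
Variable R : comNzRingType.
Implicit Types a b c f g h y z : R.

Definition mem_ideal2 a b y := exists h k, y = a * h + b * k.
Definition eqmod a b f g := mem_ideal2 a b (f - g).

Lemma mem_ideal2_dvdl a b c y : y = a * c -> mem_ideal2 a b y.
Proof. by move=> ->; exists c, 0; rewrite mulr0 addr0. Qed.

Lemma mem_ideal2_0 a b : mem_ideal2 a b 0.
Proof. by apply: (@mem_ideal2_dvdl _ _ 0); rewrite mulr0. Qed.

Lemma mem_ideal2D a b y z :
  mem_ideal2 a b y -> mem_ideal2 a b z -> mem_ideal2 a b (y + z).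
Proof. by move=> [h [k ->]] [h' [k' ->]]; exists (h + h'), (k + k'); ring. Qed.

Lemma mem_ideal2Ml a b c y : mem_ideal2 a b y -> mem_ideal2 a b (c * y).
Proof. by move=> [h [k ->]]; exists (c * h), (c * k); ring. Qed.

Lemma mem_ideal2M a b b' y z :
  mem_ideal2 a b y -> mem_ideal2 a b' z -> mem_ideal2 a (b * b') (y * z).
Proof.
move=> [h [k ->]] [h' [k' ->]].
by exists (h * (a * h' + b' * k') + b * k * h'), (k * k'); ring.
Qed.

Lemma eqmod_eq a b f g : f = g -> eqmod a b f g.
Proof. by move=> ->; rewrite /eqmod subrr; apply: mem_ideal2_0. Qed.

Lemma eqmod_refl a b f : eqmod a b f f. Proof. exact: eqmod_eq. Qed.

Lemma eqmod_sym a b f g : eqmod a b f g -> eqmod a b g f.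
Proof. by move=> [h [k E]]; exists (- h), (- k); rewrite -opprB E; ring. Qed.

Lemma eqmod_trans a b f g h : eqmod a b f g -> eqmod a b g h -> eqmod a b f h.
Proof. by move=> fg gh; have := mem_ideal2D fg gh; rewrite addrA subrK. Qed.

Lemma eqmodM a b f g f' g' :
  eqmod a b f g -> eqmod a b f' g' -> eqmod a b (f * f') (g * g').
Proof.
move=> fg fg'; have := mem_ideal2D (mem_ideal2Ml f' fg) (mem_ideal2Ml g fg').
by congr mem_ideal2; ring.
Qed.

Lemma eqmodX a b f g n : eqmod a b f g -> eqmod a b (f ^+ n) (g ^+ n).
Proof.
move=> fg; elim: n => [|n IHn]; first exact: eqmod_refl.
by rewrite !exprS; apply: eqmodM.
Qed.

Lemma eqmod_prod a b I (r : seq I) (F G : I -> R) :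
  (forall i, eqmod a b (F i) (G i)) ->
  eqmod a b (\prod_(i <- r) F i) (\prod_(i <- r) G i).
Proof.
move=> FG; elim/big_ind2: _ => //; first exact: eqmod_refl.
by move=> *; apply: eqmodM.
Qed.

Lemma eqmodW a b f g : eqmod b b f g -> eqmod a b f g.
Proof. by move=> [h [k E]]; exists 0, (h + k); rewrite E; ring. Qed.

(* f^p - g^p = (f - g) * S, and S = p g^(p-1) modulo (a, p). *)
Lemma eqmodXp a p f g : (0 < p)%N ->
  eqmod a p%:R f g -> eqmod a (p%:R ^+ 2) (f ^+ p) (g ^+ p).
Proof.
move=> p_gt0 fg; rewrite /eqmod subrXX expr2; apply: mem_ideal2M => //.
have -> : \sum_(i < p) f ^+ (p.-1 - i) * g ^+ i
    = \sum_(i < p) (f ^+ (p.-1 - i) * g ^+ i - g ^+ p.-1) + p%:R * g ^+ p.-1.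
  by rewrite big_split /= sumr_const card_ord mulr_natl mulNrn -addrA addNr addr0.
apply: mem_ideal2D; last by exists 0, (g ^+ p.-1); rewrite mulr0 add0r.
apply: (big_ind (mem_ideal2 a p%:R)) => [|y z|i _]; first exact: mem_ideal2_0.
  exact: mem_ideal2D.
have -> : g ^+ p.-1 = g ^+ (p.-1 - i) * g ^+ i by rewrite -exprD subnK // -ltnS prednK.
by apply: eqmodM; [apply: eqmodX | apply: eqmod_refl].
Qed.

Lemma eqmod_frobenius p y : prime p -> odd p ->
  eqmod p%:R p%:R ((1 - y) ^+ p) (1 - y ^+ p).
Proof.
move=> p_pr p_odd; have p_gt0 := prime_gt0 p_pr.
rewrite /eqmod [1 - y]addrC exprD1n (bigD1 ord0) //= (bigD1 ord_max) /=; last first.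
  by rewrite -val_eqE /= -lt0n.
rewrite expr0 bin0 mulr1n binn mulr1n exprNn -signr_odd p_odd expr1 mulN1r.
set S := \sum_(i | _) _.
have -> : 1 + (- y ^+ p + S) - (1 - y ^+ p) = S by ring.
apply: (big_ind (mem_ideal2 _ _)) => [|x z|i /andP[i0 imax]].
- exact: mem_ideal2_0.
- exact: mem_ideal2D.
have /dvdnP[k ->] : (p %| 'C(p, i))%N.
  apply: prime_dvd_bin => //; have := ltn_ord i.
  by move: i0 imax; rewrite -!val_eqE /=; lia.
by apply: (@mem_ideal2_dvdl _ _ ((- y) ^+ i *+ k)); rewrite mulr_natl -mulrnA mulnC.
Qed.

Lemma eqmod_frobeniusX p y s : prime p -> odd p ->
  eqmod p%:R p%:R ((1 - y) ^+ (p ^ s)) (1 - y ^+ (p ^ s)).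
Proof.
move=> p_pr p_odd; elim: s => [|s IHs]; first by rewrite expn0 !expr1; apply: eqmod_refl.
rewrite expnSr !exprM; apply: eqmod_trans (eqmodX p IHs) _.
exact: eqmod_frobenius.
Qed.

End IdealCongruence.

Section CoefComp.
Variable R : comNzRingType.
Implicit Types f g : {poly R}.

Lemma coef_mul_comp_Xn f g d a r : (size f <= d)%N -> (r < d)%N ->
  (f * (g \Po 'X^d))`_(a * d + r) = f`_r * g`_a.
Proof.
move=> sf rd; have d_gt0 : (0 < d)%N by apply: leq_ltn_trans rd.
have r_le : (r < (a * d + r).+1)%N by rewrite ltnS leq_addl.
rewrite coefM (bigD1 (Ordinal r_le)) //= big1 ?addr0.
  by rewrite coef_comp_poly_Xn // addnK dvdn_mull // mulnK.
move=> j; rewrite -val_eqE /= => jr.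
have [jd|dj] := ltnP j d; last by rewrite nth_default ?mul0r // (leq_trans sf dj).
rewrite coef_comp_poly_Xn //; case: ifP => [/dvdnP[k Ek]|_]; last by rewrite mulr0.
have := ltn_ord j; rewrite ltnS => ja.
have [ka|ak] := ltnP k a; first by have := leq_mul ka (leqnn d); lia.
have [ak'|ka] := ltnP a k; first by have := leq_mul ak' (leqnn d); lia.
by move: Ek; rewrite (@anti_leq k a) ?ka ?ak //; lia.
Qed.

Lemma coef_mul_comp_Xn2 f g d a r :
  (size f <= d + d)%N -> (r < d)%N -> (0 < a)%N ->
  (f * (g \Po 'X^d))`_(a * d + r) = f`_r * g`_a + f`_(d + r) * g`_a.-1.
Proof.
move=> sf rd a_gt0.
rewrite -{1}(poly_take_drop d f) mulrDl coefD coef_mul_comp_Xn ?size_take_poly //.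
rewrite coef_take_poly rd -mulrA.
have -> : 'X^d * (g \Po 'X^d) = ('X * g) \Po 'X^d by rewrite comp_polyM comp_polyX.
rewrite coef_mul_comp_Xn //.
- by rewrite coef_drop_poly coefXM gtn_eqF // addnC.
- by rewrite size_drop_poly leq_subLR.
Qed.

Lemma coef_1subX_exp n j :
  ((1 - 'X) ^+ n : {poly R})`_j = (-1) ^+ j * 'C(n, j)%:R.
Proof.
elim: n j => [|n IHn] j.
  by rewrite expr0 coef1 bin0n; case: j => [|j]; rewrite ?expr0 ?mul1r ?mulr0.
rewrite exprS mulrBl mul1r coefB coefXM; case: j => [|j] /=.
  by rewrite IHn subr0 !bin0.
by rewrite !IHn binS natrD exprS; ring.
Qed.

Lemma size_1subX_exp n : (size ((1 - 'X) ^+ n : {poly R}) <= n.+1)%N.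
Proof.
apply: leq_trans (size_poly_exp_leq _ _) _.
by rewrite -opprB size_polyN -polyC1 size_XsubC mul1n.
Qed.

Lemma coef_1subX_exp_rec n e : (0 < e <= n)%N ->
  e%:R * ((1 - 'X) ^+ n : {poly R})`_e
    = (e%:R - n.+1%:R) * ((1 - 'X) ^+ n : {poly R})`_e.-1.
Proof.
case: e => [|m] //= mn; rewrite !coef_1subX_exp.
have /(congr1 (GRing.natmul (1 : R))) := mul_bin_left n m.
rewrite !natrM natrB 1?ltnW // => binE.
have -> : m.+1%:R * ((-1) ^+ m.+1 * 'C(n, m.+1)%:R)
    = (-1) ^+ m.+1 * (m.+1%:R * 'C(n, m.+1)%:R) :> R by ring.
by rewrite binE exprS -[n.+1]addn1 -[m.+1]addn1 !natrD; ring.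
Qed.

End CoefComp.

Lemma coef_1subX_pred_modp p r : prime p -> (r < p)%N ->
  (p%:Z %| ((1 - 'X) ^+ p.-1 : {poly int})`_r - 1)%Z.
Proof.
move=> p_pr; have p_gt0 := prime_gt0 p_pr; rewrite coef_1subX_exp.
elim: r => [|r IHr] rp; first by rewrite expr0 bin0 mul1r subrr dvdz0.
have binS_pred : 'C(p, r.+1) = ('C(p.-1, r.+1) + 'C(p.-1, r))%N.
  by rewrite -{1}(prednK p_gt0) binS.
have dvd_bin : (p%:Z %| 'C(p, r.+1)%:R)%Z.
  by rewrite dvdzE /= natz absz_nat prime_dvd_bin.
have -> : (-1) ^+ r.+1 * 'C(p.-1, r.+1)%:R - 1
    = (-1) ^+ r.+1 * 'C(p, r.+1)%:R + ((-1) ^+ r * 'C(p.-1, r)%:R - 1) :> int.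
  by rewrite binS_pred natrD exprS; ring.
by rewrite rpredD ?IHr ?(ltnW rp) // dvdz_mull.
Qed.

Definition qprod (p L : nat) : {poly int} := \prod_(i < L) (1 - 'X^(p ^ i)).

Definition wprod (p L : nat) : {poly int} := qprod p L ^+ p.-1.

Lemma qprodD p a b : qprod p (a + b) = qprod p a * (qprod p b \Po 'X^(p ^ a)).
Proof.
rewrite /qprod big_split_ord /= rmorph_prod; congr (_ * _); apply: eq_bigr => i _.
by rewrite rmorphB rmorph1 /= comp_Xn_poly -exprM -expnD.
Qed.

Lemma qprod1 p : qprod p 1 = 1 - 'X.
Proof. by rewrite /qprod big_ord1 expn0 expr1. Qed.

Lemma wprodD p a b : wprod p (a + b) = wprod p a * (wprod p b \Po 'X^(p ^ a)).
Proof. by rewrite /wprod qprodD exprMn rmorphXn. Qed.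

Lemma wprod0 p : wprod p 0 = 1.
Proof. by rewrite /wprod /qprod big_ord0 expr1n. Qed.

Lemma wprodS p L : wprod p L.+1 = (1 - 'X) ^+ p.-1 * (wprod p L \Po 'X^p).
Proof. by rewrite -add1n wprodD expn1 /wprod qprod1. Qed.

Lemma coef_wprodS p L a r : (r < p)%N ->
  (wprod p L.+1)`_(a * p + r) = ((1 - 'X) ^+ p.-1 : {poly int})`_r * (wprod p L)`_a.
Proof.
move=> rp; rewrite wprodS coef_mul_comp_Xn //.
by apply: leq_trans (size_1subX_exp _ _) _; rewrite prednK // (leq_ltn_trans _ rp).
Qed.

Lemma coef0_wprod p L : (0 < p)%N -> (wprod p L)`_0 = 1.
Proof.
move=> p_gt0; elim: L => [|L IHL]; first by rewrite wprod0 coef1.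
by rewrite -[0%N](addn0 (0 * p)) coef_wprodS // IHL coef_1subX_exp expr0 bin0 !mulr1.
Qed.

Lemma size_wprod p L : (0 < p)%N -> (size (wprod p L) <= p ^ L)%N.
Proof.
move=> p_gt0; elim: L => [|L IHL]; first by rewrite wprod0 size_poly1.
rewrite wprodS; apply: leq_trans (size_polyMleq _ _) _.
have sA := size_1subX_exp int p.-1; rewrite prednK // in sA.
have := size_comp_poly_leq (wprod p L) 'X^p; rewrite size_polyXn /=.
have := expn_gt0 p L; rewrite p_gt0 expnSr /=.
move: (size _) (size _) (size _) (p ^ L)%N IHL sA => sW sWp sA pL; nia.
Qed.

Lemma coef_wprod_modp p L m : prime p -> (m < p ^ L)%N ->
  (p%:Z %| (wprod p L)`_m - 1)%Z.
Proof.
move=> p_pr; have p_gt0 := prime_gt0 p_pr.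
elim: L m => [|L IHL] m.
  by rewrite expn0 ltnS leqn0 => /eqP ->; rewrite wprod0 coef1 subrr dvdz0.
move=> mL; rewrite (divn_eq m p) coef_wprodS ?ltn_pmod //.
have := coef_1subX_pred_modp p_pr (ltn_pmod m p_gt0).
have := IHL (m %/ p)%N; rewrite ltn_divLR // -expnSr => /(_ mL).
set b := _`_(m %% p); set w := _`_(m %/ p) => dvd_w dvd_b.
have -> : b * w - 1 = b * (w - 1) + (b - 1) by ring.
by rewrite rpredD // dvdz_mull.
Qed.

Lemma mem_ideal2_Xn (R : comNzRingType) (b y : {poly R}) e m : (e <= m)%N ->
  mem_ideal2 'X^e b ('X^m * y).
Proof.
by move=> em; exists ('X^(m - e) * y), 0; rewrite mulr0 addr0 mulrA -exprD subnKC.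
Qed.

Lemma coef_eqmod_Xn n (c : int) (f g : {poly int}) :
  eqmod 'X^(n.+1) c%:P f g -> (c %| f`_n - g`_n)%Z.
Proof.
by move=> [h [k fg]]; rewrite -coefB fg coefD coefXnM ltnSn add0r coefCM dvdz_mulr.
Qed.

Lemma coef_eqmod_C (c : int) (f g : {poly int}) i :
  eqmod c%:P c%:P f g -> (c %| f`_i - g`_i)%Z.
Proof. by move=> [h [k fg]]; rewrite -coefB fg coefD !coefCM -mulrDr dvdz_mulr. Qed.

Lemma geom_trunc_inv (b : {poly int}) p i n : (0 < p)%N ->
  eqmod 'X^(n.+1) b ((1 - 'X^(p ^ i)) * geom_trunc p i n) 1.
Proof.
move=> p_gt0; rewrite /geom_trunc.
under eq_bigr do rewrite mulnC exprM.
rewrite -opprB mulNr -subrX1 /eqmod.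
have -> : - ('X^(p ^ i) ^+ n.+1 - 1) - 1 = 'X^(p ^ i * n.+1) * (-1) :> {poly int}.
  by rewrite exprM; ring.
by apply: mem_ideal2_Xn; rewrite leq_pmull // expn_gt0 p_gt0.
Qed.

Section MainCongruence.
Variables p n : nat.
Hypotheses (p_pr : prime p) (p_odd : odd p).
Let p_gt0 := prime_gt0 p_pr.
Let P := \prod_(i < n.+1) geom_trunc p i n.
Let Q := qprod p n.+1.

Lemma qprod_prod_geom b : eqmod 'X^(n.+1) b (Q * P) 1.
Proof.
rewrite /Q /qprod /P -big_split /= [X in eqmod _ _ _ X](_ : _ = \prod_(i < n.+1) 1).
  by apply: eqmod_prod => i; apply: geom_trunc_inv.
by rewrite big1_eq.
Qed.

Lemma qprod_frobenius : eqmod 'X^(n.+1) p%:R ((1 - 'X) * Q ^+ p) Q.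
Proof.
have QpE : eqmod 'X^(n.+1) p%:R (Q ^+ p) (Q \Po 'X^p).
  apply: eqmodW; rewrite /Q /qprod -prodrXl rmorph_prod; apply: eqmod_prod => i /=.
  apply: eqmod_trans (eqmod_frobenius _ p_pr p_odd) (eqmod_eq _ _ _).
  by rewrite rmorphB rmorph1 /= comp_Xn_poly -!exprM mulnC.
have compE : (1 - 'X) * (Q \Po 'X^p) = Q * (1 - 'X^(p ^ n.+1)).
  have := qprodD p 1 n.+1; rewrite addnC qprodD qprod1 expn1 /Q => <-.
  by rewrite rmorphB rmorph1 /= comp_polyX.
apply: eqmod_trans (eqmodM (eqmod_refl _ _ _) QpE) _.
rewrite compE /eqmod.
have -> : Q * (1 - 'X^(p ^ n.+1)) - Q = 'X^(p ^ n.+1) * - Q by ring.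
exact/mem_ideal2_Xn/ltnW/ltn_expl/prime_gt1.
Qed.

Lemma prod_geom_exp_pred : eqmod 'X^(n.+1) p%:R (P ^+ p.-1) (1 - 'X).
Proof.
have QP1 := qprod_prod_geom p%:R.
have QPp : eqmod 'X^(n.+1) p%:R ((1 - 'X) * (Q * P) ^+ p) (1 - 'X).
  by have := eqmodM (eqmod_refl _ _ (1 - 'X)) (eqmodX p QP1); rewrite expr1n mulr1.
have QPp_frob : eqmod 'X^(n.+1) p%:R ((1 - 'X) * (Q * P) ^+ p) (Q * P * P ^+ p.-1).
  rewrite exprMn mulrA -[Q * P * _]mulrA -exprS prednK //.
  exact: eqmodM qprod_frobenius (eqmod_refl _ _ _).
have QP_pred : eqmod 'X^(n.+1) p%:R (Q * P * P ^+ p.-1) (P ^+ p.-1).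
  by have := eqmodM QP1 (eqmod_refl _ _ (P ^+ p.-1)); rewrite mul1r.
exact: eqmod_trans (eqmod_sym QP_pred) (eqmod_trans (eqmod_sym QPp_frob) QPp).
Qed.

Lemma prod_geom_exp u s : (0 < s)%N ->
  eqmod 'X^(n.+1) (p%:R ^+ 2) (P ^+ (p.-1 * (u * p ^ s))) ((1 - 'X) ^+ (u * p ^ s)).
Proof.
case: s => // s _.
have -> : (u * p ^ s.+1 = p * (u * p ^ s))%N by rewrite expnS mulnCA.
rewrite mulnA !(exprM _ _ (u * p ^ s)) (exprM _ p.-1 p).
exact: eqmodX _ (eqmodXp p_gt0 prod_geom_exp_pred).
Qed.

Lemma A_eqmod u s : (0 < u)%N -> (0 < s)%N ->
  (p%:Z ^+ 2 %| A p ((p - 1) * (u * p ^ s - 1)) n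
     - (wprod p n.+1 * (1 - 'X) ^+ (u * p ^ s))`_n)%Z.
Proof.
move=> u_gt0 s_gt0; set k := ((p - 1) * (u * p ^ s - 1))%N.
have kE : (k + p.-1 = p.-1 * (u * p ^ s))%N.
  by rewrite /k !subn1 -mulnSr prednK // muln_gt0 u_gt0 expn_gt0 p_gt0.
have -> : A p k n = (P ^+ k)`_n by rewrite /A prodrXl.
apply: coef_eqmod_Xn; rewrite rmorphXn /= -natz rmorph_nat.
have QP1 := qprod_prod_geom (p%:R ^+ 2).
have := eqmodM (eqmod_refl _ _ (P ^+ k)) (eqmodX p.-1 QP1).
rewrite expr1n mulr1 exprMn mulrCA -exprD kE => /eqmod_sym Pk.
exact: eqmod_trans Pk (eqmodM (eqmod_refl _ _ _) (prod_geom_exp u s_gt0)).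
Qed.

End MainCongruence.

Lemma exp_1subX_decomp p u s : prime p -> odd p -> (0 < u)%N ->
  exists2 R1 : {poly int}, (size R1 <= (u * p ^ s).+1)%N /\ R1.[1] = 0 &
    (1 - 'X) ^+ (u * p ^ s) = ((1 - 'X) ^+ u \Po 'X^(p ^ s)) + p%:R *: R1.
Proof.
move=> p_pr p_odd u_gt0; have p_neq0 : p%:R != 0 :> int by rewrite natz -lt0n prime_gt0.
have m_gt0 : (0 < u * p ^ s)%N by rewrite muln_gt0 u_gt0 expn_gt0 prime_gt0.
have compE : (1 - 'X) ^+ u \Po 'X^(p ^ s) = (1 - 'X^(p ^ s)) ^+ u :> {poly int}.
  by rewrite rmorphXn rmorphB rmorph1 /= comp_polyX.
have [h [k decE]] := eqmodX u (eqmod_frobeniusX ('X : {poly int}) s p_pr p_odd).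
rewrite -exprM mulnC -compE -mulrDr in decE.
exists (h + k); last by rewrite scaler_nat -mulr_natl -decE; ring.
split.
  rewrite -(size_scale _ p_neq0) scaler_nat -mulr_natl -decE.
  apply: leq_trans (size_polyD _ _) _; rewrite size_polyN geq_max size_1subX_exp /=.
  apply: leq_trans (size_comp_poly_leq _ _) _; rewrite size_polyXn ltnS leq_mul2r.
  by apply/orP; right; have := size_1subX_exp int u; case: (size _).
have := congr1 (horner^~ 1) decE.
rewrite !hornerE horner_comp !hornerE expr1n subrr -(prednK m_gt0) -(prednK u_gt0).
rewrite !exprS !mul0r subrr hornerMn hornerE => /esym/eqP.
by rewrite mulf_eq0 (negPf p_neq0) => /eqP.
Qed.

Lemma coef_wprod_mul_root1 p n (R1 : {poly int}) : prime p ->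
  (size R1 <= n.+1)%N -> R1.[1] = 0 -> (p%:Z %| (wprod p n.+1 * R1)`_n)%Z.
Proof.
move=> p_pr sR1 R1_1; rewrite mulrC coefM.
have -> : \sum_(j < n.+1) R1`_j * (wprod p n.+1)`_(n - j)
    = R1.[1] + \sum_(j < n.+1) R1`_j * ((wprod p n.+1)`_(n - j) - 1).
  rewrite (horner_coef_wide 1 sR1) -big_split; apply: eq_bigr => j _ /=.
  by rewrite expr1n mulr1 mulrBr mulr1 addrC subrK.
rewrite R1_1 add0r; apply: rpred_sum => j _; apply/dvdz_mull/coef_wprod_modp => //.
exact: leq_ltn_trans (leq_subr _ _) (ltn_trans (ltnSn n) (ltn_expl _ (prime_gt1 p_pr))).
Qed.

Lemma A_eqmod_comp p u s n : prime p -> odd p -> (0 < u)%N -> (0 < s)%N ->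
  (u * p ^ s <= n)%N ->
  (p%:Z ^+ 2 %| A p ((p - 1) * (u * p ^ s - 1)) n
     - (wprod p n.+1 * ((1 - 'X) ^+ u \Po 'X^(p ^ s)))`_n)%Z.
Proof.
move=> p_pr p_odd u_gt0 s_gt0 un.
have [R1 [sR1 R1_1] decE] := exp_1subX_decomp s p_pr p_odd u_gt0.
have := A_eqmod n p_pr p_odd u_gt0 s_gt0.
rewrite decE mulrDr coefD -scalerAr coefZ => dvdA.
have dvd_pR1 : (p%:Z ^+ 2 %| p%:R * (wprod p n.+1 * R1)`_n)%Z.
  rewrite natz expr2 dvdz_mul2l ?coef_wprod_mul_root1 ?(leq_trans sR1) //.
  by rewrite eqz_nat -lt0n prime_gt0.
by have := rpredD dvdA dvd_pR1; rewrite opprD addrA subrK.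
Qed.

Lemma coef_wprod_digits p u s L a e r : (u <= p)%N -> (r < p)%N -> (0 < e < p)%N ->
  let K := (1 - 'X) ^+ (p.-1 + u) : {poly int} in
  let B := (1 - 'X) ^+ p.-1 : {poly int} in
  (wprod p (s + L.+2) * ((1 - 'X) ^+ u \Po 'X^(p ^ s)))`_(((a * p + e) * p + r) * p ^ s)
    = (wprod p L)`_a * (K`_r * B`_e + K`_(p + r) * B`_e.-1).
Proof.
move=> up rp /andP[e_gt0 ep] K B; have p_gt0 : (0 < p)%N by apply: leq_ltn_trans rp.
rewrite wprodD -mulrA -comp_polyM -[X in _`_X]addn0.
rewrite coef_mul_comp_Xn ?size_wprod ?expn_gt0 ?p_gt0 // coef0_wprod // mul1r.
rewrite wprodS mulrAC -exprD coef_mul_comp_Xn2 ?addn_gt0 ?e_gt0 ?orbT //; last first.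
  by apply: leq_trans (size_1subX_exp _ _) _; rewrite -addSn prednK // leq_add2l.
have -> : ((a * p + e).-1 = a * p + e.-1)%N by rewrite -!subn1 addnBA.
by rewrite !coef_wprodS ?(leq_ltn_trans (leq_pred e)) // /K /B; ring.
Qed.

Lemma coprimez_solve (p : nat) (d x : int) : (0 < p)%N -> coprimez d p ->
  exists2 e : nat, (e < p)%N & (p%:Z %| e%:Z * d - x)%Z.
Proof.
move=> p_gt0 /coprimezP[[a b]] /= Bez.
have := divz_eq (x * a) p; set q := (_ %/ _)%Z; set m := (_ %% _)%Z => xaE.
have m_ge0 : 0 <= m by apply: modz_ge0; rewrite eqz_nat -lt0n.
exists `|m|%N; first by rewrite -ltz_nat gez0_abs // ltz_pmod // ltz_nat.
rewrite gez0_abs //; apply/dvdzP; exists (- (x * b + q * d)).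
have -> : m = x * a - q * p by rewrite xaE; ring.
have -> : (x * a - q * p) * d - x = x * (a * d + b * p - 1) - (x * b + q * d) * p by ring.
by rewrite Bez subrr mulr0 sub0r mulNr.
Qed.

Lemma coprimez_prime p x : prime p -> coprimez x p = ~~ (p%:Z %| x)%Z.
Proof. by move=> p_pr; rewrite coprimezE absz_nat coprime_sym prime_coprime // dvdzE absz_nat. Qed.

Lemma choose_digit p (x y : int) : prime p ->
  (p%:Z %| x + y)%Z -> ~~ (p%:Z ^+ 2 %| x + y)%Z -> coprimez x p ->
  let B := (1 - 'X) ^+ p.-1 : {poly int} in
  exists2 e, (0 < e < p)%N & (p%:Z ^+ 2 %| x * B`_e + y * B`_e.-1)%Z.
Proof.
move=> p_pr /dvdzP[d xyE] not_dvd2 x_cop B; have p_gt0 := prime_gt0 p_pr.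
have d_cop : coprimez d p.
  rewrite coprimez_prime //; apply: contra not_dvd2; rewrite xyE => /dvdzP[t ->].
  by rewrite expr2 -mulrA; apply/dvdz_mull/dvdzz.
have [e ep dvd_e] := coprimez_solve x (prime_gt0 p_pr) d_cop.
have e_gt0 : (0 < e)%N.
  rewrite lt0n; apply: contraTneq x_cop => e0; rewrite coprimez_prime // negbK.
  by move: dvd_e; rewrite e0 mul0r sub0r rpredN.
have e_cop : coprimez (p%:Z ^+ 2) e.
  rewrite coprimezE abszX !absz_nat coprime_pexpl // prime_coprime //.
  by rewrite gtnNdvd.
exists e; first by rewrite e_gt0.
rewrite -(Gauss_dvdzr _ e_cop).
(* e B_e = (e - p) B_(e-1) turns e times the target into p B_(e-1) (e d - x). *)
have := @coef_1subX_exp_rec int p.-1 e; rewrite e_gt0 -ltnS prednK // => /(_ ep) recE.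
have -> : e%:Z * (x * B`_e + y * B`_e.-1)
    = B`_e.-1 * (e%:Z * (x + y) - p%:Z * x) + x * (e%:R * B`_e - (e%:R - p%:R) * B`_e.-1).
  by rewrite !natz; ring.
rewrite recE subrr mulr0 addr0 xyE.
have -> : e%:Z * (d * p%:Z) - p%:Z * x = p%:Z * (e%:Z * d - x) by ring.
by rewrite expr2 dvdz_mull // dvdz_mul2l // eqz_nat -lt0n.
Qed.

Lemma dvd_coef_1subX_add p m j : prime p -> odd p -> (m < p)%N -> (j < p)%N ->
  (p%:Z %| ((1 - 'X) ^+ (p + m))`_j + ((1 - 'X) ^+ (p + m))`_(p + j))%Z.
Proof.
move=> p_pr p_odd mp jp; set K := (1 - 'X) ^+ (p + m); pose V : {poly int} := (1 - 'X) ^+ m.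
have frobK : eqmod (p%:Z)%:P (p%:Z)%:P K ((1 - 'X^p) * V).
  by rewrite -natz rmorph_nat /K exprD; apply/eqmodM/eqmod_refl/eqmod_frobenius.
have V_high : V`_(p + j) = 0.
  by rewrite nth_default // (leq_trans (size_1subX_exp _ _)) // ltn_addr.
have -> : K`_j + K`_(p + j) = (K`_j - ((1 - 'X^p) * V)`_j)
    + (K`_(p + j) - ((1 - 'X^p) * V)`_(p + j)).
  rewrite !mulrBl !mul1r !coefB !coefXnM jp ltnNge leq_addr /= addKn V_high; ring.
by rewrite rpredD // coef_eqmod_C.
Qed.

Lemma coef_1subX_linear_rel p m : odd p ->
  let K := (1 - 'X) ^+ (p + m) : {poly int} in
  p.+1%:R * (K`_1 + K`_(p + 1)) + m%:R * (K`_0 + K`_p) = - (p%:R * (p + m).+1%:R).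
Proof.
move=> p_odd K; rewrite /K !coef_1subX_exp expr0 expr1 bin0 bin1 addn1 exprS.
rewrite -signr_odd p_odd expr1.
have /(congr1 (GRing.natmul (1 : int))) := mul_bin_left (p + m) p.
rewrite addKn !natrM => binE.
have -> : p.+1%:R * ((-1) ^+ 1 * (p + m)%:R + -1 * -1 * 'C(p + m, p.+1)%:R)
    = - (p.+1%:R * (p + m)%:R) + p.+1%:R * 'C(p + m, p.+1)%:R :> int by ring.
by rewrite binE -addn1 !natrD; ring.
Qed.

Lemma choose_digit_pair p u : prime p -> odd p -> (2 <= u)%N -> (u < p)%N ->
  let K := (1 - 'X) ^+ (p.-1 + u) : {poly int} in
  let B := (1 - 'X) ^+ p.-1 : {poly int} in
  exists r e, [/\ (r < 2)%N, (0 < e < p)%N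
    & (p%:Z ^+ 2 %| K`_r * B`_e + K`_(p + r) * B`_e.-1)%Z].
Proof.
move=> p_pr p_odd u2 up K B; have p_gt0 := prime_gt0 p_pr.
have KE : K = (1 - 'X) ^+ (p + u.-1) by rewrite /K; congr (_ ^+ _); lia.
have dvd_sum j : (j < p)%N -> (p%:Z %| K`_j + K`_(p + j))%Z.
  by move=> jp; rewrite KE dvd_coef_1subX_add //; lia.
have p_cop (x : nat) : ~~ (p %| x)%N -> coprimez x%:Z p.
  by rewrite coprimezE !absz_nat coprime_sym prime_coprime.
have [dvd0|ndvd0] := boolP (p%:Z ^+ 2 %| K`_0 + K`_p)%Z; last first.
  have K0 : K`_0 = 1 by rewrite coef_1subX_exp expr0 bin0 mul1r.
  have K0_cop : coprimez K`_0 p by rewrite K0 coprimezE /= coprime1n.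
  have := dvd_sum 0%N p_gt0; rewrite addn0 => dvd_sum0.
  have [e e_range dvd_e] := choose_digit p_pr dvd_sum0 ndvd0 K0_cop.
  by exists 0%N, e; rewrite addn0.
(* Otherwise the linear relation between the two sums would give p^2 | p (p + u). *)
have ndvd1 : ~~ (p%:Z ^+ 2 %| K`_1 + K`_(p + 1))%Z.
  apply: contraL dvd0 => dvd1.
  have := coef_1subX_linear_rel u.-1 p_odd.
  rewrite /= -KE -[(p + u.-1).+1]addnS prednK ?(ltnW u2) // => rel.
  apply/negP => dvd0; have : (p%:Z ^+ 2 %| p%:R * (p + u)%:R)%Z.
    by rewrite -[X in (_ %| X)%Z]opprK -rel rpredN rpredD // dvdz_mull.
  rewrite expr2 -natz dvdz_mul2l ?natz ?eqz_nat -?lt0n // dvdzE !absz_nat dvdn_addr //.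
  by rewrite gtnNdvd // (leq_trans _ u2).
have K1_cop : coprimez K`_1 p.
  rewrite KE coef_1subX_exp bin1 mulN1r coprimeNz natz p_cop // dvdn_addr //.
  by rewrite gtnNdvd //; lia.
have [e e_range dvd_e] := choose_digit p_pr (dvd_sum 1%N (prime_gt1 p_pr)) ndvd1 K1_cop.
by exists 1%N, e.
Qed.

Local Close Scope ring_scope.

(* nu_p(x) >= 2  <->  p^2 divides x (with nu_p(0) = +oo). *)
Theorem theorem3p1 (p u s : nat) :
  prime p -> (3 <= p)%N -> (2 <= u)%N -> (u <= p.-1)%N -> (0 < s)%N ->
  forall N : nat, exists n : nat, (N <= n)%N /\
    ((p ^ 2)%:Z %| A p ((p - 1) * (u * p ^ s - 1)) n)%Z.
Proof.
move=> p_pr p_ge3 u_ge2 u_le s_gt0 N.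
have p_odd : odd p by case: (even_prime p_pr) => // p2; rewrite p2 in p_ge3.
have up : u < p by rewrite (leq_ltn_trans u_le) // ltn_predL prime_gt0.
have [r [e [r2 e_range dvd_re]]] := choose_digit_pair p_pr p_odd u_ge2 up.
have [e_gt0 ep] := andP e_range.
pose q := (N * p + e) * p + r; pose n := q * p ^ s.
have pq : p <= q by rewrite /q; nia.
have q_le_n : q <= n by rewrite /n leq_pmulr // expn_gt0 prime_gt0.
have s_lt_n : s < n by rewrite (leq_trans (ltn_expl s (prime_gt1 p_pr))) // /n leq_pmull //; lia.
exists n; split; first by rewrite (leq_trans _ q_le_n) // /q; nia.
have := A_eqmod_comp p_pr p_odd (ltnW u_ge2) s_gt0 (leq_mul (leq_trans (ltnW up) pq) (leqnn _)).
have -> : n.+1 = s + (n - s.+1).+2 by lia.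
have -> : ((p ^ 2)%N%:Z = p%:Z ^+ 2)%R by rewrite expr2 -PoszM mulnn.
rewrite coef_wprod_digits ?(ltnW up) ?(leq_trans r2) ?prime_gt1 //.
by move=> /rpredD /(_ (dvdz_mull (wprod p (n - s.+1))`_N dvd_re)); rewrite subrK.
Qed.
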